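(* Let $H$ be a uniquely vector colorable graph whose unique optimal vector coloring $i\mapsto p_i$ is injective. Then any connected graph $G$ with $H\subseteq G\subseteq H'(p)$ (all on vertex set $V(H)$) is a core.
   Context: A vector $t$-coloring of a graph ($t\ge2$) assigns unit vectors $p_i\in\mathbb{R}^d$ to vertices with $\langle p_i,p_j\rangle\le-1/(t-1)$ for all edges $ij$; $\chi_v$ is the least such $t$, and optimal means $t=\chi_v$. A graph is uniquely vector colorable if any two of its optimal vector colorings have the same Gram matrix. $H'(p)$ is the graph on $V(H)$ in which distinct $u,v$ are adjacent iff $\langle p_u,p_v\rangle\le-1/(\chi_v(H)-1)$. A graph $G$ is a core if every homomorphism (adjacency-preserving map) $G\to G$ is an automorphism. *)

From HB Require Import structures.
From mathcomp Require Import all_boot all_order all_algebra.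
From mathcomp Require Import reals.
Set Implicit Arguments. Unset Strict Implicit. Unset Printing Implicit Defensive.
Import Order.TTheory GRing.Theory Num.Theory.
Local Open Scope ring_scope.

Definition simple_graph (T : finType) (e : rel T) : Prop :=
  symmetric e /\ irreflexive e.

Definition dotv (R : realType) (d : nat) (u v : 'rV[R]_d) : R :=
  (u *m v^T) 0 0.

Definition vector_coloring (R : realType) (T : finType) (e : rel T)
    (d : nat) (p : T -> 'rV[R]_d) (t : R) : Prop :=
  2 <= t /\ (forall i, dotv (p i) (p i) = 1) /\
  (forall i j, e i j -> dotv (p i) (p j) <= - (t - 1)^-1).

Definition is_vchrom (R : realType) (T : finType) (e : rel T) (t : R) : Prop :=
  (exists d (p : T -> 'rV[R]_d), vector_coloring e p t) /\
  (forall (s : R) d (p : T -> 'rV[R]_d), vector_coloring e p s -> t <= s).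

Definition optimal_vector_coloring (R : realType) (T : finType) (e : rel T)
    (d : nat) (p : T -> 'rV[R]_d) : Prop :=
  exists t : R, is_vchrom e t /\ vector_coloring e p t.

Definition uniquely_vector_colorable (R : realType) (T : finType) (e : rel T)
    : Prop :=
  forall d1 (p1 : T -> 'rV[R]_d1) d2 (p2 : T -> 'rV[R]_d2),
    optimal_vector_coloring e p1 -> optimal_vector_coloring e p2 ->
    forall i j, dotv (p1 i) (p1 j) = dotv (p2 i) (p2 j).

(* H'(p): distinct u v adjacent iff <p_u,p_v> <= -1/(chi_v(H)-1). *)
Definition Hprime (R : realType) (T : finType) (t : R) (d : nat)
    (p : T -> 'rV[R]_d) : rel T :=
  fun u v => (u != v) && (dotv (p u) (p v) <= - (t - 1)^-1).

Definition graph_hom (T : finType) (e : rel T) (f : T -> T) : Prop :=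
  forall u v, e u v -> e (f u) (f v).

Definition graph_aut (T : finType) (e : rel T) (f : T -> T) : Prop :=
  bijective f /\ forall u v, e u v = e (f u) (f v).

Definition is_core (T : finType) (e : rel T) : Prop :=
  forall f : T -> T, graph_hom e f -> graph_aut e f.

Definition connected_graph (T : finType) (e : rel T) : Prop :=
  forall u v, connect e u v.

From HB Require Import structures.
From mathcomp Require Import all_boot all_order all_algebra.
From mathcomp Require Import reals.
From mathcomp Require Import ring.
Set Implicit Arguments. Unset Strict Implicit. Unset Printing Implicit Defensive.
Import Order.TTheory GRing.Theory Num.Theory.
Local Open Scope ring_scope.

(* If f is an endomorphism of G, then, since H <= G <= H'(p), the map
   i |-> p (f i) is again an optimal vector coloring of H.  By unique vector
   colorability it has the Gram matrix of p, so f i = f j forces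
   <p i, p j> = 1, hence p i = p j (unit vectors) and i = j.  An injective
   endomorphism of a finite graph is an automorphism. *)

Lemma dotvE (R : realType) d (u v : 'rV[R]_d) :
  dotv u v = \sum_k u 0 k * v 0 k.
Proof. by rewrite /dotv !mxE; apply: eq_bigr => k _; rewrite mxE. Qed.

Lemma dotvC (R : realType) d (u v : 'rV[R]_d) : dotv u v = dotv v u.
Proof. by rewrite !dotvE; apply: eq_bigr => k _; rewrite mulrC. Qed.

Lemma dotvBB (R : realType) d (u v : 'rV[R]_d) :
  dotv (u - v) (u - v) = dotv u u + dotv v v - 2 * dotv u v.
Proof.
have -> : dotv (u - v) (u - v) = dotv u u - dotv u v - (dotv v u - dotv v v).
  by rewrite /dotv linearB /= mulmxBl !mulmxBr !mxE.
by rewrite (dotvC v u); ring.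
Qed.

Lemma dotv_eq0 (R : realType) d (u : 'rV[R]_d) : dotv u u = 0 -> u = 0.
Proof.
rewrite dotvE => /psumr_eq0P u0; apply/rowP => k; rewrite mxE.
have /eqP := u0 (fun i _ => sqr_ge0 (u 0 i)) k isT.
by rewrite mulf_eq0 orbb => /eqP.
Qed.

Lemma unit_dotv1_eq (R : realType) d (u v : 'rV[R]_d) :
  dotv u u = 1 -> dotv v v = 1 -> dotv u v = 1 -> u = v.
Proof.
move=> u1 v1 uv1; apply/eqP; rewrite -subr_eq0; apply/eqP/dotv_eq0.
by rewrite dotvBB u1 v1 uv1; ring.
Qed.

Lemma vector_coloring_Hprime (R : realType) (T : finType) d
    (p : T -> 'rV[R]_d) (t : R) :
  2 <= t -> (forall i, dotv (p i) (p i) = 1) -> vector_coloring (Hprime t p) p t.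
Proof. by move=> t2 p1; do !split=> //; move=> i j /andP[]. Qed.

Lemma vector_coloring_comp (R : realType) (T U : finType) (e : rel T)
    (e' : rel U) (f : T -> U) d (p : U -> 'rV[R]_d) (t : R) :
  (forall u v, e u v -> e' (f u) (f v)) ->
  vector_coloring e' p t -> vector_coloring e (p \o f) t.
Proof.
by move=> hom [t2 [p1 pe]]; split=> //; split=> [i|i j /hom /pe //]; exact: p1.
Qed.

Lemma gram_preserving_injective (R : realType) (T : finType) d
    (p : T -> 'rV[R]_d) (f : T -> T) :
  (forall i, dotv (p i) (p i) = 1) -> injective p ->
  (forall i j, dotv (p (f i)) (p (f j)) = dotv (p i) (p j)) -> injective f.
Proof.
move=> p1 pinj gram i j fij; apply/pinj/unit_dotv1_eq => //.
by rewrite -gram fij p1.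
Qed.

Lemma inj_graph_hom_aut (T : finType) (e : rel T) (f : T -> T) :
  injective f -> graph_hom e f -> graph_aut e f.
Proof.
move=> finj hom; split=> [|u v]; first exact: injF_bij.
pose E := [set x : T * T | e x.1 x.2].
pose f2 (x : T * T) := (f x.1, f x.2).
have f2inj : injective f2 by move=> [a b] [c d] [] /finj -> /finj ->.
have f2E : f2 @: E = E.
  apply/eqP; rewrite eqEcard (card_imset _ f2inj) leqnn andbT.
  by apply/subsetP => y /imsetP[x]; rewrite inE => /hom exy ->; rewrite inE.
apply/idP/idP=> [/hom //|].
have : (f u, f v) \in f2 @: E -> e u v.
  by case/imsetP=> [[a b]]; rewrite inE => eab [/finj -> /finj ->].
by rewrite f2E inE; apply.
Qed.

Theorem theorem4p7 (R : realType) (T : finType) (eH eG : rel T)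
    (t : R) (d : nat) (p : T -> 'rV[R]_d) :
  simple_graph eH ->
  uniquely_vector_colorable R eH ->
  is_vchrom eH t ->
  vector_coloring eH p t ->
  injective p ->
  simple_graph eG ->
  connected_graph eG ->
  (forall u v, eH u v -> eG u v) ->
  (forall u v, eG u v -> Hprime t p u v) ->
  is_core eG.
Proof.
move=> _ uvc vchi pcol pinj _ _ HG GH f hom.
have [t2 [p1 _]] := pcol.
have pfcol : vector_coloring eH (p \o f) t.
  apply: vector_coloring_comp (vector_coloring_Hprime t2 p1) => u v /HG /hom.
  exact: GH.
apply: inj_graph_hom_aut hom; apply: (gram_preserving_injective p1 pinj).
by apply: uvc; exists t.
Qed.
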